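(* Consider the setting and hypotheses of the data-driven invariance theorem: the unknown system $\dot x=A_\star Z(x)+B_\star W(x)u$, data $\dot x^j=A_\star z^j+B_\star v^j+d^j$ with $|d^j|^2\le\omega$ ($j=0,\dots,T-1$), $\epsilon>0$, and a symmetric $A_{\mathrm{i}}\in\mathbb{R}^{p\times p}$, $B_{\mathrm{i}}\in\mathbb{R}^{p\times n}$, $\tau_0,\dots,\tau_{T-1}$ satisfying $$\begin{bmatrix}-I-\sum_{j}\tau_jc_j & B_{\mathrm{i}}^\top-\sum_{j}\tau_jb_j^\top & B_{\mathrm{i}}^\top\\ B_{\mathrm{i}}-\sum_{j}\tau_jb_j & A_{\mathrm{i}}-\sum_{j}\tau_ja_j & 0\\ B_{\mathrm{i}} & 0 & -A_{\mathrm{i}}\end{bmatrix}\preceq 0,\quad A_{\mathrm{i}}\succ 0,\quad \tau_j\ge0,$$ with $\bar\zeta:=-A_{\mathrm{i}}^{-1}B_{\mathrm{i}}$, $\bar P:=A_{\mathrm{i}}^{-1/2}$, $\bar Q:=I_n$. Let $\sigma_1,\dots,\sigma_q:\mathbb{R}^n\to\mathbb{R}$ be polynomials, $\lambda:\mathbb{R}^n\to\mathbb{R}$ a polynomial with $\lambda(x)\ge0$ for all $x$, and $\bar\eta>0$. Define $\mathcal{S}:=\{x:\sigma_j(x)\le0,\ j=1,\dots,q\}$ and, for $\theta\ge0$, $\mathcal{L}_\theta:=\{x:\lambda(x)\le\theta\}$. Suppose there exist polynomials $\ell,\eta,h:\mathbb{R}^n\to\mathbb{R}$, a polynomial $K:\mathbb{R}^n\to\mathbb{R}^m$,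 SOS polynomials $s_1,\dots,s_q,\varsigma\in\Sigma$ and $\theta\ge0$ such that $$\eta-\bar\eta\in\Sigma,\quad -H\in\Sigma_{1+p+n},\quad \varsigma(\lambda-\theta)-h\in\Sigma,\quad s_jh-\sigma_j\in\Sigma\ (j=1,\dots,q),$$ where $$H(x):=\begin{bmatrix}\ell(x)h(x)+\epsilon+\frac{\partial h}{\partial x}(x)\,\bar\zeta^\top\begin{bmatrix}Z(x)\\ W(x)K(x)\end{bmatrix} & \star & \star\\ \eta(x)\bar P\begin{bmatrix}Z(x)\\ W(x)K(x)\end{bmatrix} & -2\eta(x)I_p & \star\\ \bar Q^{1/2}\frac{\partial h}{\partial x}(x)^\top & 0 & -2\eta(x)I_n\end{bmatrix}.$$ Then $\mathcal{I}:=\{x\in\mathbb{R}^n:h(x)\le0\}$ is invariant for the closed-loop system $\dot x=A_\star Z(x)+B_\star W(x)K(x)$ and $\mathcal{L}_\theta\subseteq\mathcal{I}\subseteq\mathcal{S}$. (In particular this holds for any solution of the program maximizing $\theta$ subject to these constraints.)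
   Context: $A_\star\in\mathbb{R}^{n\times N_A}$, $B_\star\in\mathbb{R}^{n\times N_B}$ are unknown constant matrices; $Z:\mathbb{R}^n\to\mathbb{R}^{N_A}$ is a known vector of monomials and $W:\mathbb{R}^n\to\mathbb{R}^{N_B\times m}$ a known matrix of monomials; $p:=N_A+N_B$; $z^j=Z(x^j)$, $v^j=W(x^j)u^j$ for sampled states/inputs and $\dot x^j$ the sampled derivatives; $c_j:=-\omega I_n+\dot x^j(\dot x^j)^\top$, $b_j:=-\begin{bmatrix}z^j\\ v^j\end{bmatrix}(\dot x^j)^\top$, $a_j:=\begin{bmatrix}z^j\\ v^j\end{bmatrix}\begin{bmatrix}z^j\\ v^j\end{bmatrix}^\top$; sums run over $j=0,\dots,T-1$. $\Sigma$ is the set of SOS polynomials: polynomials $h$ with $h=\sum_{i=1}^k h_i^2$ for some polynomials $h_i$. $\Sigma_r$ is the set of SOS matrix polynomials: $r\times r$ matrix polynomials $H$ with $H(x)=\sum_{i=1}^kH_i(x)^\top H_i(x)$ for some $r\times r$ matrix polynomials $H_i$. $\star$ denotes blocks determined by symmetry; $\frac{\partial h}{\partial x}(x)$ is the gradient as a row vector. A set $\mathcal{I}$ is invariant for $\dot x=a(x)$ ($a$ polynomial) if every maximal solution starting in $\mathcal{I}$ remains in $\mathcal{I}$ on its whole interval of existence. *)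

From HB Require Import structures.
From mathcomp Require Import all_boot all_order all_algebra.
From mathcomp Require Import all_classical all_reals all_analysis.
From mathcomp Require mpoly.

Set Implicit Arguments.
Unset Strict Implicit.
Unset Printing Implicit Defensive.

Import Order.TTheory GRing.Theory Num.Theory.
Import numFieldNormedType.Exports.
Local Open Scope classical_set_scope.
Local Open Scope ring_scope.

Section Defs.
Context {R : realType} {n : nat}.

(* Points of R^n are column vectors 'cV[R]_n; coordinate i of x is x i 0. *)

Definition polyfun (f : 'cV[R]_n -> R) : Prop :=
  exists P : mpoly.mpoly n R, forall x, f x = mpoly.meval (fun i => x i 0) P.

Definition monomialfun (f : 'cV[R]_n -> R) : Prop :=
  exists k : 'I_n -> nat, forall x, f x = \prod_(i < n) (x i 0) ^+ k i.

Definition polymx (r c : nat) (F : 'cV[R]_n -> 'M[R]_(r, c)) : Prop :=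
  forall i j, polyfun (fun x => F x i j).

Definition sos (f : 'cV[R]_n -> R) : Prop :=
  exists (k : nat) (g : 'I_k -> 'cV[R]_n -> R),
    (forall i, polyfun (g i)) /\ forall x, f x = \sum_(i < k) (g i x) ^+ 2.

Definition sosmx (r : nat) (F : 'cV[R]_n -> 'M[R]_r) : Prop :=
  exists (k : nat) (G : 'I_k -> 'cV[R]_n -> 'M[R]_r),
    (forall i, polymx (G i)) /\
    forall x, F x = \sum_(i < k) ((G i x)^T *m G i x).

Definition grad (h : 'cV[R]_n -> R) (x : 'cV[R]_n) : 'rV[R]_n :=
  \row_(i < n) derive h x (delta_mx i 0 : 'cV[R]_n).

Definition sol_dom (T : \bar R) : set R := [set t | 0 <= t /\ (t%:E < T)%E].

Definition is_solution (a : 'cV[R]_n -> 'cV[R]_n) (T : \bar R)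
    (phi : R -> 'cV[R]_n) : Prop :=
  (0 < T)%E /\
  {within sol_dom T, continuous phi} /\
  (forall t, 0 < t -> (t%:E < T)%E ->
     derivable phi t 1 /\ derive1 phi t = a (phi t)).

Definition is_maximal_solution (a : 'cV[R]_n -> 'cV[R]_n) (T : \bar R)
    (phi : R -> 'cV[R]_n) : Prop :=
  is_solution a T phi /\
  forall (T' : \bar R) (psi : R -> 'cV[R]_n), is_solution a T' psi ->
    (forall t, sol_dom T t -> psi t = phi t) -> (T' <= T)%E.

Definition invariant_set (a : 'cV[R]_n -> 'cV[R]_n) (I : set 'cV[R]_n) : Prop :=
  forall (T : \bar R) (phi : R -> 'cV[R]_n), is_maximal_solution a T phi ->
    I (phi 0) -> forall t, sol_dom T t -> I (phi t).

End Defs.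

Definition psdmx {R : realType} (k : nat) (M : 'M[R]_k) : Prop :=
  forall v : 'cV[R]_k, 0 <= (v^T *m M *m v) 0 0.
Definition nsdmx {R : realType} (k : nat) (M : 'M[R]_k) : Prop := psdmx (- M).
Definition pdmx {R : realType} (k : nat) (M : 'M[R]_k) : Prop :=
  forall v : 'cV[R]_k, v != 0 -> 0 < (v^T *m M *m v) 0 0.

Section DataDriven.
Context {R : realType} {n m NA NB T : nat}.
Local Notation p := (NA + NB)%N.

Definition lmi_mx (omega : R) (zs : 'I_T -> 'cV[R]_NA) (vs : 'I_T -> 'cV[R]_NB)
    (xdots : 'I_T -> 'cV[R]_n) (tau : 'I_T -> R)
    (Ai : 'M[R]_p) (Bi : 'M[R]_(p, n)) : 'M[R]_(n + (p + p)) :=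
  let zv j := col_mx (zs j) (vs j) in
  let c j := - (omega%:M) + xdots j *m (xdots j)^T in
  let b j := - (zv j *m (xdots j)^T) in
  let a j := zv j *m (zv j)^T in
  block_mx
    (- 1%:M - \sum_(j < T) tau j *: c j)
    (row_mx (Bi^T - \sum_(j < T) tau j *: (b j)^T) Bi^T)
    (col_mx (Bi - \sum_(j < T) tau j *: b j) Bi)
    (block_mx (Ai - \sum_(j < T) tau j *: a j) 0 0 (- Ai)).

(* the matrix polynomial H(x) of the theorem (size 1 + p + n),
   with zetabar = - Ai^-1 Bi, Pbar = Ai^(-1/2), Qbar = I_n *)
Definition H_mx (Z : 'cV[R]_n -> 'cV[R]_NA) (W : 'cV[R]_n -> 'M[R]_(NB, m))
    (zetabar : 'M[R]_(p, n)) (Pbar : 'M[R]_p) (Qbar_sqrt : 'M[R]_n)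
    (eps : R) (ell eta h : 'cV[R]_n -> R) (K : 'cV[R]_n -> 'cV[R]_m)
    (x : 'cV[R]_n) : 'M[R]_(1 + (p + n)) :=
  let zw := col_mx (Z x) (W x *m K x) in
  let col1 := col_mx (eta x *: (Pbar *m zw)) (Qbar_sqrt *m (grad h x)^T) in
  block_mx
    ((ell x * h x + eps + (grad h x *m zetabar^T *m zw) 0 0)%:M)
    col1^T
    col1
    (block_mx (- (2 * eta x) *: 1%:M) 0 0 (- (2 * eta x) *: 1%:M)).

End DataDriven.

From HB Require Import structures.
From mathcomp Require Import all_boot all_order all_algebra.
From mathcomp Require Import all_classical all_reals all_analysis.
From mathcomp Require Import ring lra.
From mathcomp Require mpoly.

Import Order.TTheory GRing.Theory Num.Theory.
Import numFieldNormedType.Exports.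
Local Open Scope classical_set_scope.
Local Open Scope ring_scope.

(* The LMI is an S-procedure certificate: every [zeta = [A B]^T] explaining
   the data with noise [|d|^2 <= omega] satisfies [(zeta - zetabar)^T Ai (zeta - zetabar) <= I],
   in particular the true [[Astar Bstar]^T].  On this ellipsoid the SOS
   certificate [-H >= 0], tested against a suitable vector (a completion of
   squares), yields [dh/dx (Astar Z + Bstar W K) <= - ell h - eps].  This
   strict barrier inequality makes [{h <= 0}] invariant: at the last zero of
   [h] along a trajectory that would leave the set, [d/dt h <= -eps < 0]. *)

Section Barrier.
Context {R : realType}.

Lemma within_continuous_dist_lt {A : set R} {f : R -> R} {x e : R} :
  {within A, continuous f} -> A x -> 0 < e ->
  exists2 d, 0 < d & forall y, A y -> `|x - y| < d -> `|f x - f y| < e.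
Proof.
move=> /subspace_continuousP cf Ax e0.
have /cvgrPdist_lt/(_ e e0)/nbhs_ballP[d /= d0 fd] := cf x Ax.
by exists d => // y Ay xy; apply: fd.
Qed.

Lemma exists_right_near {c b d : R} : c < b -> 0 < d ->
  exists2 s, c < s <= b & s - c < d.
Proof.
move=> cb d0; exists (c + Num.min (d / 2) (b - c)); last first.
  by rewrite addrAC subrr add0r gt_min; apply/orP; left; lra.
have : 0 < Num.min (d / 2) (b - c) by rewrite lt_min; apply/andP; split; lra.
have : Num.min (d / 2) (b - c) <= b - c by rewrite ge_min lexx orbT.
by move=> *; apply/andP; split; lra.
Qed.

Lemma last_root_before {psi : R -> R} {a b : R} : a <= b ->
  {within `[a, b], continuous psi} -> psi a <= 0 -> 0 < psi b ->
  exists2 c, a <= c < b & psi c = 0 /\ forall s, c < s <= b -> 0 < psi s.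
Proof.
move=> ab cpsi psia psib.
have in_ab y : a <= y -> y <= b -> [set` `[a, b]] y.
  by move=> ay yb; rewrite /= in_itv /= ay yb.
set S := [set s | (a <= s <= b) /\ psi s <= 0].
have Sa : S a by split; rewrite ?lexx ?ab.
have hsS : has_sup S by split; [exists a | exists b => s [/andP[]]].
set c := sup S.
have ac : a <= c := sup_upper_bound hsS Sa.
have cb : c <= b by apply: sup_le_ub; [exists a | move=> s [/andP[]]].
have pos_after s : c < s <= b -> 0 < psi s.
  move=> /andP[cs sb]; rewrite ltNge; apply/negP => ps.
  have : s <= c by apply: sup_upper_bound => //; split => //; apply/andP; split; lra.
  by rewrite leNgt cs.
have psic_le0 : psi c <= 0.
  rewrite leNgt; apply/negP => pc.
  have [d d0 near_c] := within_continuous_dist_lt cpsi (in_ab c ac cb) pc.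
  have [s [/andP[a_s sb] ps] ds] := sup_adherent d0 hsS; rewrite -/c in ds.
  have sc : s <= c by apply: sup_upper_bound => //; split => //; apply/andP.
  have cs_d : `|c - s| < d by rewrite ger0_norm ?subr_ge0 //; lra.
  by have := near_c s (in_ab s a_s sb) cs_d; rewrite ltr_norml => /andP[]; lra.
have cb' : c < b.
  by rewrite lt_neqAle cb andbT; apply: contraTneq psic_le0 => ->; rewrite -ltNge.
have psic_ge0 : 0 <= psi c.
  rewrite leNgt; apply/negP => pc; rewrite -oppr_gt0 in pc.
  have [d d0 near_c] := within_continuous_dist_lt cpsi (in_ab c ac cb) pc.
  have [s /andP[cs sb] sd] := exists_right_near cb' d0.
  have cs_d : `|c - s| < d by rewrite distrC gtr0_norm ?subr_gt0.
  have := near_c s (in_ab s ltac:(lra) sb) cs_d; rewrite ltr_norml => /andP[+ _].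
  by have := pos_after s ltac:(by rewrite cs sb); lra.
by exists c; [rewrite ac cb' | split => //; apply/eqP; rewrite eq_le psic_le0].
Qed.

Lemma sol_dom_barrier (Tm : \bar R) (psi L : R -> R) (eps : R) : 0 < eps ->
  {within sol_dom Tm, continuous psi} -> {within sol_dom Tm, continuous L} ->
  (forall t, 0 < t -> (t%:E < Tm)%E ->
     derivable psi t 1 /\ derive1 psi t <= - (L t * psi t) - eps) ->
  psi 0 <= 0 -> forall t, sol_dom Tm t -> psi t <= 0.
Proof.
move=> eps0 cpsi cL dpsi psi0 b [b0 bTm]; rewrite leNgt; apply/negP => psib.
have dom_le y : 0 <= y -> y <= b -> sol_dom Tm y.
  by move=> y0 yb; split => //; apply: le_lt_trans bTm; rewrite lee_fin.
have cpsi_b : {within `[0, b], continuous psi}.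
  apply: continuous_subspaceW cpsi => y; rewrite /= in_itv /= => /andP[].
  exact: dom_le.
have [c /andP[c0 cb] [psic pos_after]] := last_root_before b0 cpsi_b psi0 psib.
have cLpsi : {within sol_dom Tm, continuous (L \* psi)}.
  by move=> y; apply: continuousM; [exact: cL | exact: cpsi].
have [d d0 small] :=
  within_continuous_dist_lt cLpsi (dom_le c c0 (ltW cb)) eps0.
have [s /andP[cs sb] sd] := exists_right_near cb d0.
have der y : y \in `]c, s[ -> derivable psi y 1 /\ derive1 psi y <= 0.
  rewrite in_itv /= => /andP[cy ys].
  have yTm : (y%:E < Tm)%E by apply: le_lt_trans bTm; rewrite lee_fin; lra.
  have [dy bound] := dpsi y ltac:(lra) yTm.
  have cy_d : `|c - y| < d by rewrite distrC gtr0_norm ?subr_gt0 //; lra.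
  have /= := small y (dom_le y ltac:(lra) ltac:(lra)) cy_d.
  rewrite psic mulr0 sub0r normrN ltr_norml => /andP[Lpsi_gt _].
  by split => //; lra.
have cpsi_cs : {within `[c, s], continuous psi}.
  apply: continuous_subspaceW cpsi_b => y; rewrite /= !in_itv /= => /andP[? ?].
  by apply/andP; split; lra.
have := ler0_derive1_le_cc (fun y yI => (der y yI).1) (fun y yI => (der y yI).2).
move=> /(_ cpsi_cs s c); rewrite !in_itv /= !lexx (ltW cs) => /(_ isT isT isT).
by have := pos_after s ltac:(by rewrite cs sb); lra.
Qed.

End Barrier.

Lemma derive1_comp_grad {R : realType} {n : nat} {h : 'cV[R]_n -> R}
    {phi : R -> 'cV[R]_n} {t : R} :
  differentiable h (phi t) -> derivable phi t 1 ->
  derivable (h \o phi) t 1 /\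
  derive1 (h \o phi) t = (grad h (phi t) *m derive1 phi t) 0 0.
Proof.
move=> dh /derivable1_diffP dphi.
have dhphi : differentiable (h \o phi) t by apply: differentiable_comp.
split; first exact/derivable1_diffP.
rewrite derive1E' // diff_comp // /= -derive1E' //.
rewrite [in LHS](matrix_sum_delta (derive1 phi t)) linear_sum /= mxE.
apply: eq_bigr => i _; rewrite big_ord1 linearZ /= -deriveE //.
by rewrite !mxE mulrC.
Qed.

Lemma sublevel_invariant {R : realType} {n : nat} (a : 'cV[R]_n -> 'cV[R]_n)
    (h ell : 'cV[R]_n -> R) (eps : R) :
  0 < eps -> (forall x, differentiable h x) -> continuous ell ->
  (forall x, (grad h x *m a x) 0 0 <= - (ell x * h x) - eps) ->
  invariant_set a [set x | h x <= 0].
Proof.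
move=> eps0 dh cell h_decr Tm phi [[_ [cphi dphi]] _].
apply: (@sol_dom_barrier _ Tm (h \o phi) (ell \o phi) eps eps0).
- by move=> y; apply: continuous_comp (cphi y) (differentiable_continuous (dh _)).
- by move=> y; apply: continuous_comp (cphi y) (cell _).
- move=> y y0 yTm; have [dphi_y phi'] := dphi y y0 yTm.
  have [dhphi ->] := derive1_comp_grad (dh (phi y)) dphi_y.
  by rewrite phi'; split => //; apply: h_decr.
Qed.

Lemma polyfun_differentiable {R : realType} {n : nat} {f : 'cV[R]_n -> R}
    (x : 'cV[R]_n) : polyfun f -> differentiable f x.
Proof.
move=> [P fP].
have -> : f = \sum_(k <- mpoly.msupp P) (cst (mpoly.mcoeff k P) *
    \prod_(i < n) (fun y : 'cV[R]_n => y i 0 ^+ mpoly.fun_of_multinom k i)).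
  apply: funext => y; rewrite fP mpoly.mevalE fct_sumE.
  by apply: eq_bigr => k _; rewrite /= fct_prodE.
elim/big_ind: _ => [|f1 f2|k _]; first exact: differentiable_cst.
  exact: differentiableD.
apply: differentiableM; first exact: differentiable_cst.
elim/big_ind: _ => [|f1 f2|i _]; first exact: differentiable_cst.
  exact: differentiableM.
case: (mpoly.fun_of_multinom k i) => [|e]; first exact: differentiable_cst.
have -> : (fun y : 'cV[R]_n => y i 0 ^+ e.+1) = (fun y : 'cV[R]_n => y i 0) ^+ e.+1.
  by apply: funext => y; rewrite exprfctE.
exact/differentiableX/differentiable_coord.
Qed.

Lemma polyfun_continuous {R : realType} {n : nat} {f : 'cV[R]_n -> R} :
  polyfun f -> continuous f.
Proof. by move=> pf x; apply/differentiable_continuous/polyfun_differentiable. Qed.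

Section BilinearForms.
Context {R : realType}.

Definition dot {k : nat} (x y : 'cV[R]_k) : R := (x^T *m y) 0 0.
Definition bform {k l : nat} (A : 'M[R]_(k, l)) (x : 'cV[R]_k) (y : 'cV[R]_l) : R :=
  (x^T *m A *m y) 0 0.

Lemma dotE {k} (x y : 'cV[R]_k) : dot x y = \sum_i x i 0 * y i 0.
Proof. by rewrite /dot mxE; apply: eq_bigr => i _; rewrite mxE. Qed.

Lemma dotC {k} (x y : 'cV[R]_k) : dot x y = dot y x.
Proof. by rewrite !dotE; apply: eq_bigr => i _; rewrite mulrC. Qed.

Lemma dotDl {k} (x y z : 'cV[R]_k) : dot (x + y) z = dot x z + dot y z.
Proof. by rewrite /dot linearD /= mulmxDl mxE. Qed.

Lemma dotDr {k} (x y z : 'cV[R]_k) : dot z (x + y) = dot z x + dot z y.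
Proof. by rewrite /dot mulmxDr mxE. Qed.

Lemma dotNl {k} (x z : 'cV[R]_k) : dot (- x) z = - dot x z.
Proof. by rewrite /dot linearN /= mulNmx mxE. Qed.

Lemma dotNr {k} (x z : 'cV[R]_k) : dot z (- x) = - dot z x.
Proof. by rewrite /dot mulmxN mxE. Qed.

Lemma dotZl {k} a (x z : 'cV[R]_k) : dot (a *: x) z = a * dot x z.
Proof. by rewrite /dot linearZ /= -scalemxAl mxE. Qed.

Lemma dotZr {k} a (x z : 'cV[R]_k) : dot z (a *: x) = a * dot z x.
Proof. by rewrite /dot -scalemxAr mxE. Qed.

Lemma dot_ge0 {k} (x : 'cV[R]_k) : 0 <= dot x x.
Proof. by rewrite dotE; apply: sumr_ge0 => i _; rewrite -expr2 sqr_ge0. Qed.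

Lemma dot_mulmxr {k l} (A : 'M[R]_(k, l)) x y : dot x (A *m y) = dot (A^T *m x) y.
Proof. by rewrite /dot trmx_mul trmxK mulmxA. Qed.

Lemma dot_col_mx {k l} (a u : 'cV[R]_k) (b w : 'cV[R]_l) :
  dot (col_mx a b) (col_mx u w) = dot a u + dot b w.
Proof. by rewrite /dot tr_col_mx mul_row_col mxE. Qed.

Lemma dot_cauchy_schwarz {k} (d v : 'cV[R]_k) : dot d v ^+ 2 <= dot d d * dot v v.
Proof.
have [v0|vNZ] := eqVneq (dot v v) 0.
  have vi i : v i 0 = 0.
    move: v0; rewrite dotE => /psumr_eq0P sq0.
    have /eqP := sq0 (fun j _ => ltac:(by rewrite -expr2 sqr_ge0)) i isT.
    by rewrite mulf_eq0 orbb => /eqP.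
  have -> : dot d v = 0 by rewrite dotE big1 // => i _; rewrite vi mulr0.
  by rewrite v0 expr0n /= mulr0.
have v_pos : 0 < dot v v by rewrite lt_neqAle eq_sym vNZ dot_ge0.
have := dot_ge0 (dot v v *: d - dot d v *: v).
rewrite !dotDl !dotDr !dotNl !dotNr !dotZl !dotZr (dotC v d).
nra.
Qed.

Lemma bformE {k l} (A : 'M[R]_(k, l)) x y : bform A x y = dot x (A *m y).
Proof. by rewrite /bform /dot mulmxA. Qed.

Lemma bformD {k l} (A B : 'M[R]_(k, l)) x y :
  bform (A + B) x y = bform A x y + bform B x y.
Proof. by rewrite /bform mulmxDr mulmxDl mxE. Qed.

Lemma bformN {k l} (A : 'M[R]_(k, l)) x y : bform (- A) x y = - bform A x y.
Proof. by rewrite /bform mulmxN mulNmx mxE. Qed.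

Lemma bformB {k l} (A B : 'M[R]_(k, l)) x y :
  bform (A - B) x y = bform A x y - bform B x y.
Proof. by rewrite bformD bformN. Qed.

Lemma bformZ {k l} a (A : 'M[R]_(k, l)) x y : bform (a *: A) x y = a * bform A x y.
Proof. by rewrite /bform -scalemxAr -scalemxAl mxE. Qed.

Lemma bform0 {k l} x y : bform (0 : 'M[R]_(k, l)) x y = 0.
Proof. by rewrite /bform mulmx0 mul0mx mxE. Qed.

Lemma bform1 {k} (x y : 'cV[R]_k) : bform 1%:M x y = dot x y.
Proof. by rewrite bformE mul1mx. Qed.

Lemma bform_scalar {k} a (x y : 'cV[R]_k) : bform a%:M x y = a * dot x y.
Proof. by rewrite -scalemx1 bformZ bform1. Qed.

Lemma bformDl {k l} (A : 'M[R]_(k, l)) x x' y :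
  bform A (x + x') y = bform A x y + bform A x' y.
Proof. by rewrite !bformE dotDl. Qed.

Lemma bformDr {k l} (A : 'M[R]_(k, l)) x y y' :
  bform A x (y + y') = bform A x y + bform A x y'.
Proof. by rewrite !bformE mulmxDr dotDr. Qed.

Lemma bform_sum {k l I} (r : seq I) (F : I -> 'M[R]_(k, l)) x y :
  bform (\sum_(i <- r) F i) x y = \sum_(i <- r) bform (F i) x y.
Proof.
elim: r => [|a r IH]; first by rewrite !big_nil bform0.
by rewrite !big_cons bformD IH.
Qed.

Lemma bform_sumZ {k l I} (r : seq I) (a : I -> R) (F : I -> 'M[R]_(k, l)) x y :
  bform (\sum_(i <- r) a i *: F i) x y = \sum_(i <- r) a i * bform (F i) x y.
Proof. by rewrite bform_sum; apply: eq_bigr => i _; rewrite bformZ. Qed.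

Lemma bform_tr {k l} (A : 'M[R]_(k, l)) x y : bform A^T y x = bform A x y.
Proof. by rewrite !bformE dot_mulmxr trmxK dotC. Qed.

Lemma bform_mulmx {k l r} (A : 'M[R]_(k, l)) (B : 'M[R]_(l, r)) x y :
  bform (A *m B) x y = bform B (A^T *m x) y.
Proof. by rewrite /bform trmx_mul trmxK !mulmxA. Qed.

Lemma bform_outer {k l} (u : 'cV[R]_k) (w : 'cV[R]_l) x y :
  bform (u *m w^T) x y = dot x u * dot w y.
Proof. by rewrite /bform /dot !mulmxA -(mulmxA (x^T *m u)) mxE big_ord1. Qed.

Lemma bform_block3 {k1 k2 k3} (A11 : 'M[R]_(k1, k1)) (A12 : 'M[R]_(k1, k2))
    (A13 : 'M[R]_(k1, k3)) (A21 : 'M[R]_(k2, k1)) (A31 : 'M[R]_(k3, k1))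
    (A22 : 'M[R]_(k2, k2)) (A23 : 'M[R]_(k2, k3)) (A32 : 'M[R]_(k3, k2))
    (A33 : 'M[R]_(k3, k3)) a b c :
  bform (block_mx A11 (row_mx A12 A13) (col_mx A21 A31) (block_mx A22 A23 A32 A33))
    (col_mx a (col_mx b c)) (col_mx a (col_mx b c)) =
  bform A11 a a + bform A12 a b + bform A13 a c + bform A21 b a + bform A31 c a
  + bform A22 b b + bform A23 b c + bform A32 c b + bform A33 c c.
Proof.
rewrite bformE mul_block_col !mul_row_col mul_col_mx mul_block_col !dot_col_mx.
by rewrite !dotDr !dot_col_mx !dotDr -!bformE !addrA; ring.
Qed.

Lemma bform_col1 {k} (u y : 'cV[R]_k) : bform u y 1%:M = dot y u.
Proof. by rewrite bformE mulmx1. Qed.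

Lemma dot1 : dot (1%:M : 'cV[R]_1) 1%:M = 1.
Proof. by rewrite dotE big_ord1 !mxE mulr1. Qed.

Lemma pdmx_unit {k} {A : 'M[R]_k} : pdmx A -> A \in unitmx.
Proof.
move=> pdA; rewrite unitmxE unitfE; apply/negP => /det0P [v vNZ vA].
have vTNZ : v^T != 0 by apply: contra vNZ => /eqP vT0; rewrite -(trmxK v) vT0 trmx0.
by have := pdA v^T vTNZ; rewrite trmxK vA mul0mx mxE ltxx.
Qed.

Lemma sos_ge0 {n : nat} {f : 'cV[R]_n -> R} : sos f -> forall x, 0 <= f x.
Proof.
by move=> [k [g [_ fE]]] x; rewrite fE; apply: sumr_ge0 => i _; apply: sqr_ge0.
Qed.

Lemma sosmx_psd {n r : nat} {F : 'cV[R]_n -> 'M[R]_r} :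
  sosmx F -> forall x, psdmx (F x).
Proof.
move=> [k [G [_ FG]]] x v; rewrite FG -/(bform _ v v) bform_sum.
by apply: sumr_ge0 => i _; rewrite bform_mulmx trmxK bformE dot_ge0.
Qed.

End BilinearForms.

Section DataConsistency.
Context {R : realType}.

(* [(zeta - zc)^T Ai (zeta - zc) <= I]: the paper's ellipsoid of parameters
   [zeta = [A B]^T] consistent with the data, with [Qbar = I]. *)
Definition mx_ellipsoid {p n : nat} (Ai : 'M[R]_p) (zc zeta : 'M[R]_(p, n)) : Prop :=
  forall v, bform Ai ((zeta - zc) *m v) ((zeta - zc) *m v) <= dot v v.

(* The form is [(v^T d)^2 - omega |v|^2], nonpositive by Cauchy-Schwarz. *)
Lemma data_form_nonpos {n p : nat} (zeta : 'M[R]_(p, n)) (zv : 'cV[R]_p)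
    (xdot d v : 'cV[R]_n) (omega : R) :
  xdot = zeta^T *m zv + d -> dot d d <= omega ->
  bform (- (omega%:M) + xdot *m xdot^T) v v
  + bform (- (zv *m xdot^T))^T v (zeta *m v)
  + bform (- (zv *m xdot^T)) (zeta *m v) v
  + bform (zv *m zv^T) (zeta *m v) (zeta *m v) <= 0.
Proof.
move=> xdotE noise.
rewrite bform_tr !bformD !bformN bform_scalar !bform_outer.
have zeta_dot : dot (zeta *m v) zv = dot v xdot - dot v d.
  by rewrite xdotE dotDr addrK dot_mulmxr trmxK.
rewrite zeta_dot (dotC zv) zeta_dot (dotC xdot v).
have := dot_cauchy_schwarz d v; rewrite (dotC d v).
have := dot_ge0 v.
nra.
Qed.

(* Evaluate the LMI at [(v, zeta v, Ai^-1 Bi v)]; the data terms are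
   nonpositive and weighted by [tau >= 0] (S-procedure). *)
Lemma lmi_mx_ellipsoid {n NA NB T : nat} {Astar : 'M[R]_(n, NA)} {Bstar : 'M[R]_(n, NB)}
    {zs : 'I_T -> 'cV[R]_NA} {vs : 'I_T -> 'cV[R]_NB} {xdots ds : 'I_T -> 'cV[R]_n}
    {omega : R} {Ai : 'M[R]_(NA + NB)} {Bi : 'M[R]_(NA + NB, n)} {tau : 'I_T -> R} :
  (forall j, xdots j = Astar *m zs j + Bstar *m vs j + ds j) ->
  (forall j, dot (ds j) (ds j) <= omega) ->
  Ai^T = Ai -> Ai \in unitmx -> (forall j, 0 <= tau j) ->
  nsdmx (lmi_mx omega zs vs xdots tau Ai Bi) ->
  mx_ellipsoid Ai (- (invmx Ai *m Bi)) (row_mx Astar Bstar)^T.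
Proof.
move=> xdotsE noise Ai_sym Ai_unit tau_ge0 lmi v.
set zeta := (row_mx Astar Bstar)^T; set w := invmx Ai *m Bi *m v.
have := lmi (col_mx v (col_mx (zeta *m v) w)).
rewrite -/(bform _ _ _) bformN /lmi_mx bform_block3 !bform0 !bformB !bformN bform1.
rewrite !bform_sumZ.
set S1 := \sum_i _; set S2 := \sum_i _; set S3 := \sum_i _; set S4 := \sum_i _.
have data_le0 : S1 + S2 + S3 + S4 <= 0.
  rewrite /S1 /S2 /S3 /S4 -!big_split /=; apply: sumr_le0 => j _.
  rewrite -!mulrDr; apply: mulr_ge0_le0 => //.
  apply: data_form_nonpos (noise j).
  by rewrite xdotsE /zeta trmxK mul_row_col.
have Aiw : Ai *m w = Bi *m v by rewrite /w !mulmxA mulmxV // mul1mx.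
have F1 : bform Ai (zeta *m v) w = bform Bi (zeta *m v) v by rewrite !bformE Aiw.
have F2 : bform Ai w (zeta *m v) = bform Bi (zeta *m v) v.
  by rewrite -bform_tr Ai_sym F1.
have F3 : bform Ai w w = bform Bi w v by rewrite !bformE Aiw.
rewrite opprK mulmxDl -/w bformDl !bformDr F1 F2 F3 !bform_tr.
lra.
Qed.

Lemma unitmx_sqrt_invmx {k : nat} {P A : 'M[R]_k} :
  P *m P = invmx A -> A \in unitmx -> P \in unitmx.
Proof.
by move=> PP A_unit; have := unitmx_mul P P; rewrite PP unitmx_inv A_unit => /esym/andP[].
Qed.

Lemma dot_invmx_sqrt {k : nat} {P A : 'M[R]_k} (u : 'cV[R]_k) :
  P^T = P -> P *m P = invmx A -> A \in unitmx ->
  dot (invmx P *m u) (invmx P *m u) = bform A u u.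
Proof.
move=> P_sym PP A_unit; have P_unit := unitmx_sqrt_invmx PP A_unit.
have PA : P *m A = invmx P.
  rewrite -[P *m A]mul1mx -(mulVmx P_unit) -!mulmxA (mulmxA P P) PP mulVmx //.
  by rewrite mulmx1.
set y := invmx P *m u.
have Py : P *m y = u by rewrite /y mulmxA mulmxV // mul1mx.
by rewrite bformE -Py dotC dot_mulmxr P_sym !mulmxA PA mulVmx // mul1mx.
Qed.

(* Test [-H] against [(1, s y, s g^T)] with [s = 1/(2 eta)] and
   [y = P^-1 (zeta - zc) g^T]: completing the square leaves
   [s (|g|^2 - |y|^2)], nonnegative on the ellipsoid. *)
Lemma H_mx_grad_bound {n m NA NB : nat} {Z : 'cV[R]_n -> 'cV[R]_NA}
    {W : 'cV[R]_n -> 'M[R]_(NB, m)} {zc zeta : 'M[R]_(NA + NB, n)}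
    {P Ai : 'M[R]_(NA + NB)} {eps : R} {ell eta h : 'cV[R]_n -> R}
    {K : 'cV[R]_n -> 'cV[R]_m} {x : 'cV[R]_n} :
  P^T = P -> P *m P = invmx Ai -> Ai \in unitmx -> mx_ellipsoid Ai zc zeta ->
  0 < eta x -> nsdmx (H_mx Z W zc P 1%:M eps ell eta h K x) ->
  (grad h x *m zeta^T *m col_mx (Z x) (W x *m K x)) 0 0 <= - (ell x * h x + eps).
Proof.
move=> P_sym PP Ai_unit zeta_ell eta_pos H_nsd.
set e := eta x in eta_pos *; set g := grad h x; set zw := col_mx (Z x) (W x *m K x).
have P_unit := unitmx_sqrt_invmx PP Ai_unit.
set u := (zeta - zc) *m g^T; set y := invmx P *m u; set s := (2 * e)^-1.
have y_le : dot y y <= dot g^T g^T.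
  by rewrite (dot_invmx_sqrt _ P_sym PP Ai_unit); apply: zeta_ell.
have yPzw : dot y (P *m zw) = (g *m zeta^T *m zw) 0 0 - (g *m zc^T *m zw) 0 0.
  rewrite dot_mulmxr P_sym /y mulmxA mulmxV // mul1mx /u /dot trmx_mul trmxK.
  by rewrite linearB /= mulmxBr mulmxBl !mxE.
have := H_nsd (col_mx 1%:M (col_mx (s *: y) (s *: g^T))).
rewrite -/(bform _ _ _) bformN /H_mx -/e -/g -/zw tr_col_mx bform_block3.
rewrite !bform0 bform_scalar dot1 mulr1 !bform_tr !bform_col1 !bformZ !bform1.
rewrite !mul1mx !dotZl !dotZr yPzw.
have e_neq0 : e != 0 by rewrite gt_eqF.
have half X : s * (e * X) = X / 2 by rewrite /s; field.
have square X : - (2 * e) * (s * (s * X)) = - (s * X) by rewrite /s; field.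
have slack : 0 <= s * dot g^T g^T - s * dot y y.
  by rewrite -mulrBr; apply: mulr_ge0; [rewrite /s invr_ge0 | ]; lra.
rewrite !half !square; lra.
Qed.

End DataConsistency.

Theorem mainTheorem5
  (R : realType) (n m NA NB : nat)
  (Z : 'cV[R]_n -> 'cV[R]_NA) (W : 'cV[R]_n -> 'M[R]_(NB, m))
  (HZ : forall i, monomialfun (fun x => Z x i 0))
  (HW : forall i j, monomialfun (fun x => W x i j))
  (Astar : 'M[R]_(n, NA)) (Bstar : 'M[R]_(n, NB))
  (T : nat) (xs : 'I_T -> 'cV[R]_n) (us : 'I_T -> 'cV[R]_m)
  (xdots : 'I_T -> 'cV[R]_n) (ds : 'I_T -> 'cV[R]_n) (omega : R)
  (Hdata : forall j, xdots j = Astar *m Z (xs j) + Bstar *m (W (xs j) *m us j) + ds j)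
  (Hnoise : forall j, ((ds j)^T *m ds j) 0 0 <= omega)
  (eps : R) (Heps : 0 < eps)
  (Ai : 'M[R]_(NA + NB)) (Bi : 'M[R]_(NA + NB, n)) (tau : 'I_T -> R)
  (HAisym : Ai^T = Ai)
  (HLMI : nsdmx (lmi_mx omega (fun j => Z (xs j)) (fun j => W (xs j) *m us j)
                        xdots tau Ai Bi))
  (HAipd : pdmx Ai)
  (Htau : forall j, 0 <= tau j)
  (Pbar : 'M[R]_(NA + NB))
  (HPsym : Pbar^T = Pbar) (HPpd : pdmx Pbar) (HPsq : Pbar *m Pbar = invmx Ai)
  (q : nat) (sigma : 'I_q -> 'cV[R]_n -> R) (Hsigma : forall j, polyfun (sigma j))
  (lam : 'cV[R]_n -> R) (Hlam : polyfun lam) (Hlam0 : forall x, 0 <= lam x)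
  (etabar : R) (Hetabar : 0 < etabar)
  (ell eta h : 'cV[R]_n -> R) (K : 'cV[R]_n -> 'cV[R]_m)
  (s : 'I_q -> 'cV[R]_n -> R) (varsigma : 'cV[R]_n -> R) (theta : R)
  (Hell : polyfun ell) (Heta : polyfun eta) (Hh : polyfun h) (HK : polymx K)
  (Hs : forall j, sos (s j)) (Hvarsigma : sos varsigma) (Htheta : 0 <= theta)
  (C1 : sos (fun x => eta x - etabar))
  (C2 : sosmx (fun x => - H_mx Z W (- (invmx Ai *m Bi)) Pbar 1%:M eps ell eta h K x))
  (C3 : sos (fun x => varsigma x * (lam x - theta) - h x))
  (C4 : forall j, sos (fun x => s j x * h x - sigma j x)) :
  invariant_set (fun x => Astar *m Z x + Bstar *m (W x *m K x)) [set x | h x <= 0]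
  /\ [set x | lam x <= theta] `<=` [set x | h x <= 0]
  /\ [set x | h x <= 0] `<=` [set x | forall j, sigma j x <= 0].
Proof.
have Ai_unit := pdmx_unit HAipd.
have zeta_ell := lmi_mx_ellipsoid Hdata Hnoise HAisym Ai_unit Htau HLMI.
have h_decr x : (grad h x *m (Astar *m Z x + Bstar *m (W x *m K x))) 0 0
                <= - (ell x * h x) - eps.
  have eta_pos : 0 < eta x by have := sos_ge0 C1 x; lra.
  have := H_mx_grad_bound HPsym HPsq Ai_unit zeta_ell eta_pos (sosmx_psd C2 x).
  by rewrite trmxK -mulmxA mul_row_col opprD.
split; first exact: sublevel_invariant Heps (polyfun_differentiable^~ Hh)
  (polyfun_continuous Hell) h_decr.
split=> x /= => [lam_le | h_le j].
- by have := sos_ge0 C3 x; have := sos_ge0 Hvarsigma x; nra.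
- by have := sos_ge0 (C4 j) x; have := sos_ge0 (Hs j) x; nra.
Qed.
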